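(* Consider binary node classification with classes $\{0,1\}$, let $k\in\{0,1\}$, and let $c_0,c_1\in(0,1)$ be the class homophily parameters. Assume the classes are balanced ($P(\hat{Y}=0)=P(\hat{Y}=1)$), the graph is heterophilic ($c_k<1-c_{1-k}$), and $0<c_k<0.5$. If two nodes $n$ and $m$ have degrees $d_n>d_m$ and $|\mathcal{N}_k(n)| = |\mathcal{N}_k(m)|$ (so that $|\mathcal{N}_{1-k}(n)| > |\mathcal{N}_{1-k}(m)|$), then $$P\big(\hat{Y}_{n} = k \mid \{Y_j\}_{j\in\mathcal{N}(n)}\big) > P\big(\hat{Y}_{m} = k \mid \{Y_j\}_{j\in\mathcal{N}(m)}\big).$$
   Context: Model: each node $i$ has a (latent/soft) class $\hat{Y}_i\in\{0,1\}$, and each neighbor $j\in\mathcal{N}(i)$ has an observed label $Y_j\in\{0,1\}$. Given $\hat{Y}_i$, the neighbor labels are conditionally independent with $P(Y_j=k\mid \hat{Y}_i=k)=c_k$ and $P(Y_j=1-k\mid\hat{Y}_i=k)=1-c_k$ for $k\in\{0,1\}$ ($c_k$ is the class homophily of class $k$). The posterior is obtained by Bayes' rule: $P(\hat Y_i=k\mid\{Y_j=y_j\}_{j\in\mathcal N(i)})\propto P(\hat Y_i=k)\prod_{j\in\mathcal N(i)}P(Y_j=y_j\mid \hat Y_i=k)$, conditioning on the observed neighbor labels. Notation: $\mathcal{N}_k(i)=\{j\in\mathcal{N}(i): y_j=k\}$, $\mathcal{N}_{1-k}(i)=\{j\in\mathcal{N}(i): y_j=1-k\}$, and the degree of $i$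 is $d_i=|\mathcal N(i)|=|\mathcal{N}_k(i)|+|\mathcal{N}_{1-k}(i)|$. *)

(* Classes {0,1} are encoded as bool: false = 0, true = 1;
   the "other class" 1-k is ~~ k. *)
From mathcomp Require Import all_boot all_order all_algebra.
Set Implicit Arguments. Unset Strict Implicit. Unset Printing Implicit Defensive.
Import Order.TTheory GRing.Theory Num.Theory.
Local Open Scope ring_scope.

(* P(Y_j = y | Yhat_i = yh): c_yh if y = yh, 1 - c_yh otherwise. *)
Definition neigh_lik {R : realFieldType} (c : bool -> R) (yh y : bool) : R :=
  if y == yh then c yh else 1 - c yh.

(* Joint term P(Yhat_i = yh) * prod_j P(Y_j = y_j | Yhat_i = yh),
   neighbor labels given as the sequence ys (its size is the degree). *)
Definition joint {R : realFieldType} (prior : bool -> R) (c : bool -> R)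
  (ys : seq bool) (yh : bool) : R :=
  prior yh * \prod_(y <- ys) neigh_lik c yh y.

(* Bayes posterior P(Yhat_i = k | {Y_j = y_j}_{j in N(i)}). *)
Definition posterior {R : realFieldType} (prior : bool -> R) (c : bool -> R)
  (ys : seq bool) (k : bool) : R :=
  joint prior c ys k / \sum_(l : bool) joint prior c ys l.

Definition nb_class (ys : seq bool) (k : bool) : nat := count (fun y => y == k) ys.

From mathcomp Require Import all_boot all_order all_algebra.
From mathcomp Require Import lra.
Import Order.TTheory GRing.Theory Num.Theory.
Local Open Scope ring_scope.

(* With a uniform prior the posterior of class k is L_k / (L_k + L_(1-k)),
   where L_l is the likelihood of the neighbour labels under class l, so it
   grows exactly when the odds L_(1-k) / L_k shrink.  Each neighbour of class
   1-k multiplies these odds by c_(1-k) / (1 - c_k), which is < 1 by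
   heterophily, while the neighbours of class k contribute the same factor at
   both nodes. *)

Definition likelihood {R : realFieldType} (c : bool -> R) (ys : seq bool)
  (l : bool) : R :=
  \prod_(y <- ys) neigh_lik c l y.

Lemma nb_class_negb (ys : seq bool) (k : bool) :
  (nb_class ys k + nb_class ys (~~ k))%N = size ys.
Proof.
rewrite -(count_predC (fun y => y == k)); congr (_ + _)%N.
by apply: eq_count => y; case: y; case: k.
Qed.

Lemma ltr_share (R : realFieldType) (a b a' b' : R) :
  0 < a -> 0 < b -> 0 < a' -> 0 < b' ->
  (a / (a + b) < a' / (a' + b')) = (a * b' < a' * b).
Proof.
move=> a_gt0 b_gt0 a'_gt0 b'_gt0.
rewrite ltr_pdivrMr ?addr_gt0 // mulrAC ltr_pdivlMr ?addr_gt0 //.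
by rewrite !mulrDr mulrC ltrD2l.
Qed.

Lemma ltr_cross_expn {R : realFieldType} {y z : R} {m n : nat} :
  0 < y -> y < z -> (m < n)%N -> z ^+ m * y ^+ n < z ^+ n * y ^+ m.
Proof.
move=> y_gt0 lt_yz lt_mn; rewrite -(subnKC (ltnW lt_mn)) !exprD.
have zy_gt0 : 0 < z ^+ m * y ^+ m.
  by rewrite mulr_gt0 // exprn_gt0 // (lt_trans y_gt0).
rewrite mulrA [z ^+ m * z ^+ _ * _]mulrAC ltr_pM2l //.
by rewrite ltrXn2r ?ltW // subn_eq0 -ltnNge.
Qed.

Section Likelihood.

Variables (R : realFieldType) (c : bool -> R).

Lemma likelihood_class (ys : seq bool) (l : bool) :
  likelihood c ys l = c l ^+ nb_class ys l * (1 - c l) ^+ nb_class ys (~~ l).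
Proof.
rewrite /likelihood /nb_class; elim: ys => [|y ys IH]; first by rewrite big_nil mulr1.
rewrite big_cons IH /neigh_lik /=.
have -> : (y == ~~ l) = ~~ (y == l) by case: y.
by case: (y == l); rewrite /= ?add0n add1n exprS; [exact: mulrA | exact: mulrCA].
Qed.

Lemma likelihood_gt0 (ys : seq bool) (l : bool) :
  (forall l', 0 < c l' < 1) -> 0 < likelihood c ys l.
Proof.
move=> c01; apply: prodr_gt0 => y _; have /andP[c_gt0 c_lt1] := c01 l.
by rewrite /neigh_lik; case: (y == l); rewrite ?subr_gt0.
Qed.

Lemma posterior_uniform_prior (prior : bool -> R) (ys : seq bool) (k : bool) :
  prior false = prior true -> prior k != 0 ->
  posterior prior c ys k =
  likelihood c ys k / (likelihood c ys k + likelihood c ys (~~ k)).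
Proof.
move=> prior_eq prior_neq0.
have sum_joint : \sum_(l : bool) joint prior c ys l =
    prior k * (likelihood c ys k + likelihood c ys (~~ k)).
  rewrite big_bool /joint mulrDr.
  by case: k prior_neq0 => /=; rewrite prior_eq // addrC.
by rewrite /posterior sum_joint {1}/joint -mulf_div mulfV ?mul1r.
Qed.

Lemma likelihood_odds_lt (ys_n ys_m : seq bool) (k : bool) :
  (forall l, 0 < c l < 1) -> c (~~ k) < 1 - c k ->
  nb_class ys_n k = nb_class ys_m k ->
  (nb_class ys_m (~~ k) < nb_class ys_n (~~ k))%N ->
  likelihood c ys_m k * likelihood c ys_n (~~ k) <
  likelihood c ys_n k * likelihood c ys_m (~~ k).
Proof.
move=> c01 heterophily same_k more_other.
rewrite !likelihood_class negbK same_k.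
set a := nb_class ys_m k.
have /andP[ck_gt0 ck_lt1] := c01 k; have /andP[cnk_gt0 cnk_lt1] := c01 (~~ k).
have common_gt0 : 0 < c k ^+ a * (1 - c (~~ k)) ^+ a.
  by rewrite mulr_gt0 ?exprn_gt0 ?subr_gt0.
have := ltr_cross_expn cnk_gt0 heterophily more_other.
rewrite -(ltr_pM2l common_gt0); lra.
Qed.

End Likelihood.

Theorem mainTheorem4 (R : realFieldType) (prior c : bool -> R) (k : bool)
  (ys_n ys_m : seq bool) :
  (forall l, 0 <= prior l) -> prior false + prior true = 1 ->
  prior false = prior true ->
  (forall l, 0 < c l < 1) ->
  c k < 1 - c (~~ k) ->
  0 < c k < 1 / 2 ->
  (size ys_m < size ys_n)%N ->
  nb_class ys_n k = nb_class ys_m k ->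
  posterior prior c ys_n k > posterior prior c ys_m k.
Proof.
move=> _ prior_sum prior_eq c01 heterophily _ deg_lt same_k.
have prior_neq0 : prior k != 0 by apply/eqP; case: (k) => ?; lra.
have heterophily' : c (~~ k) < 1 - c k by lra.
have more_other : (nb_class ys_m (~~ k) < nb_class ys_n (~~ k))%N.
  by rewrite -(ltn_add2l (nb_class ys_n k)) nb_class_negb {1}same_k nb_class_negb.
rewrite !posterior_uniform_prior // ltr_share ?likelihood_gt0 //.
exact: likelihood_odds_lt.
Qed.
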